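(* Let $f:\mathbb{R}^d\to\mathbb{R}$ be convex and differentiable, $h:\mathbb{R}^d\to\mathbb{R}\cup\{+\infty\}$ proper, closed and convex, $F=f+h$. Let $x\in\mathbb{R}^d$ and $\lambda>0$ be such that $\mathrm{(LS)}(x,\lambda)$ holds, and let $x^+=x-\lambda G^{f}_{\lambda h}(x)$. Then $$F(x^+)\le F(x)-\tfrac{\lambda}{2}\|G^{f}_{\lambda h}(x)\|^2 .$$
   Context: $\mathbb{R}^d$ carries the standard inner product $\langle\cdot,\cdot\rangle$ and Euclidean norm $\|\cdot\|$. For $\lambda>0$ the proximal operator is $\mathrm{prox}_{\lambda h}(w)=\arg\min_{u\in\mathbb{R}^d}\big\{\lambda h(u)+\tfrac12\|u-w\|^2\big\}$. The gradient mapping is $G^{f}_{\lambda h}(x)=\frac{1}{\lambda}\Big(x-\mathrm{prox}_{\lambda h}\big(x-\lambda\nabla f(x)\big)\Big)$. For $x\in\mathbb{R}^d$ and $\lambda>0$, the linesearch condition $\mathrm{(LS)}(x,\lambda)$ is: with $G=G^{f}_{\lambda h}(x)$, $f(x-2\lambda G)\le f(x-\lambda G)-\lambda\langle G,\nabla f(x)\rangle+\tfrac{\lambda}{2}\|G\|^2$. *)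

From HB Require Import structures.
From mathcomp Require Import all_boot all_order all_algebra.
From mathcomp Require Import all_classical all_reals all_analysis.
Set Implicit Arguments. Unset Strict Implicit. Unset Printing Implicit Defensive.
Import Order.TTheory GRing.Theory Num.Theory.
Import numFieldNormedType.Exports.
Local Open Scope classical_set_scope.
Local Open Scope ring_scope.

Section Defs.
Variables (R : realType) (d : nat).
Notation V := 'rV[R]_d.

Definition inner (u v : V) : R := \sum_(i < d) u ord0 i * v ord0 i.
Definition enorm (u : V) : R := Num.sqrt (inner u u).

Definition grad (f : V -> R) (x : V) : V :=
  \row_(i < d) derive f x (delta_mx ord0 i).

Definition convex_fun (f : V -> R) : Prop :=
  forall (x y : V) (t : R), 0 <= t <= 1 ->
    f (t *: x + (1 - t) *: y) <= t * f x + (1 - t) * f y.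

Definition differentiable_everywhere (f : V -> R) : Prop :=
  forall x : V, differentiable f x.

(* extended-valued h : R^d -> R U {+oo} *)
Definition never_minfty (h : V -> \bar R) : Prop := forall x, h x != -oo%E.
Definition proper_fun (h : V -> \bar R) : Prop :=
  never_minfty h /\ exists x, h x != +oo%E.
(* convexity in the extended sense (t in (0,1); endpoints trivial) *)
Definition convex_efun (h : V -> \bar R) : Prop :=
  forall (x y : V) (t : R), 0 < t < 1 ->
    let z : V := t *: x + (1 - t) *: y in
    (h z <= t%:E * h x + (1 - t)%:E * h y)%E.
(* closed = lower semicontinuous = all sublevel sets closed (Euclidean topology) *)
Definition closed_efun (h : V -> \bar R) : Prop :=
  forall (a : R) (x : V),
    (forall e : R, 0 < e -> exists y : V, enorm (y - x) < e /\ (h y <= a%:E)%E) ->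
    (h x <= a%:E)%E.

Definition prox_obj (lam : R) (h : V -> \bar R) (w u : V) : \bar R :=
  (lam%:E * h u + (2^-1 * enorm (u - w) ^+ 2)%:E)%E.
Definition is_prox (lam : R) (h : V -> \bar R) (w p : V) : Prop :=
  forall u : V, (prox_obj lam h w p <= prox_obj lam h w u)%E.
(* the (unique, when h is proper closed convex) minimizer, chosen classically *)
Definition prox (lam : R) (h : V -> \bar R) (w : V) : V :=
  xget 0 (is_prox lam h w).

Definition grad_map (f : V -> R) (lam : R) (h : V -> \bar R) (x : V) : V :=
  lam^-1 *: (x - prox lam h (x - lam *: grad f x)).

Definition LS (f : V -> R) (h : V -> \bar R) (x : V) (lam : R) : Prop :=
  let G := grad_map f lam h x in
  f (x - (2 * lam) *: G) <= f (x - lam *: G) - lam * inner G (grad f x)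
                             + lam / 2 * enorm G ^+ 2.

Definition Fsum (f : V -> R) (h : V -> \bar R) (x : V) : \bar R := ((f x)%:E + h x)%E.
End Defs.

(* Midpoint convexity of [f] together with the linesearch condition gives
   [f x+ <= f x - lam <G, grad f x> + lam/2 |G|^2], and the variational inequality of
   the proximal point [x+ = prox (x - lam grad f x)] gives
   [h x+ - h x <= lam <G, grad f x> - lam |G|^2]; adding them proves the claim.  Since [prox] is defined by choice, the
   real work is the existence of a proximal point: the proximal objective is lower
   semicontinuous, and by convexity of [h] it grows quadratically away from a point
   where [h] is finite, so its minimum over a large compact box is a global minimum. *)

From HB Require Import structures.
From mathcomp Require Import all_boot all_order all_algebra.
From mathcomp Require Import all_classical all_reals all_analysis.
From mathcomp Require Import ring lra zify.
Import Order.TTheory GRing.Theory Num.Theory.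
Import numFieldNormedType.Exports.
Set Implicit Arguments. Unset Strict Implicit. Unset Printing Implicit Defensive.
Local Open Scope classical_set_scope.
Local Open Scope ring_scope.

Lemma le0_of_le_small (R : realFieldType) (z k : R) : 0 <= k ->
  (forall eta, 0 < eta < 1 -> z <= eta * k) -> z <= 0.
Proof.
move=> k0 zsmall; apply/ler_addgt0Pr => e e0; rewrite add0r.
pose eta := Num.min 2^-1 (e / (k + 1)).
have eta0 : 0 < eta by rewrite lt_min invr_gt0 ltr0n divr_gt0 // ltr_wpDl.
have eta1 : eta < 1 by rewrite gt_min invf_lt1 ?ltr1n.
have etak : eta * k <= e.
  have : eta * (k + 1) <= e by rewrite -ler_pdivlMr ?ltr_wpDl // ge_min lexx orbT.
  nra.
by apply: le_trans etak; apply: zsmall; rewrite eta0 eta1.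
Qed.

Section Euclid.
Variables (R : realType) (d : nat).
Implicit Types (u v : 'rV[R]_d) (t : R).

Lemma inner_ge0 u : 0 <= inner u u.
Proof. by apply: sumr_ge0 => i _; rewrite -expr2 sqr_ge0. Qed.

Lemma enorm_ge0 u : 0 <= enorm u.
Proof. exact: sqrtr_ge0. Qed.

Lemma enorm_sqr u : enorm u ^+ 2 = inner u u.
Proof. by rewrite sqr_sqrtr // inner_ge0. Qed.

Lemma inner_selfDZ u v t :
  inner (u + t *: v) (u + t *: v) = inner u u + 2 * t * inner u v + t ^+ 2 * inner v v.
Proof.
rewrite /inner !mulr_sumr -!big_split /=; apply: eq_bigr => i _; rewrite !mxE; ring.
Qed.

(* Peter--Paul inequality, coordinatewise from [(eta a + b)^2 >= 0]. *)
Lemma inner_selfD_ge u v eta : 0 < eta ->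
  (1 - eta) * inner u u + (1 - eta^-1) * inner v v <= inner (u + v) (u + v).
Proof.
move=> eta0; rewrite /inner !mulr_sumr -big_split /=; apply: ler_sum => i _.
rewrite !mxE -!expr2 -subr_ge0.
have -> : (u ord0 i + v ord0 i) ^+ 2 - ((1 - eta) * u ord0 i ^+ 2
    + (1 - eta^-1) * v ord0 i ^+ 2) = (eta * u ord0 i + v ord0 i) ^+ 2 / eta.
  by field; rewrite gt_eqF.
by rewrite divr_ge0 ?sqr_ge0 ?ltW.
Qed.

Lemma normr_coord_le_enorm u i : `|u ord0 i| <= enorm u.
Proof.
rewrite -sqrtr_sqr; apply: ler_wsqrtr; rewrite /inner (bigD1 i) //= -expr2 lerDl.
by apply: sumr_ge0 => j _; rewrite -expr2 sqr_ge0.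
Qed.

Lemma enorm_lt_coord u e : 0 < e ->
  (forall i, `|u ord0 i| < e / d.+1%:R) -> enorm u < e.
Proof.
move=> e0 ucoord; set delta := e / d.+1%:R.
have delta0 : 0 < delta by rewrite divr_gt0 ?ltr0n.
have innerle : inner u u <= d%:R * delta ^+ 2.
  rewrite -[d in d%:R]card_ord mulr_natl -sumr_const; apply: ler_sum => i _.
  rewrite -expr2 -real_normK ?num_real //.
  by have := ucoord i; have := normr_ge0 (u ord0 i); rewrite -/delta; nra.
have -> : e = delta * d.+1%:R by rewrite /delta divfK ?pnatr_eq0.
clearbody delta.
rewrite -[X in _ < X]gtr0_norm ?mulr_gt0 ?ltr0n // -sqrtr_sqr.
rewrite ltr_sqrt ?exprn_gt0 ?mulr_gt0 ?ltr0n //.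
have dsqr : d%:R < d.+1%:R ^+ 2 :> R by rewrite -natrX ltr_nat expnS expn1; nia.
apply: (le_lt_trans innerle); rewrite exprMn mulrC ltr_pM2l ?exprn_gt0 //.
Qed.

End Euclid.

Section Closed.
Variables (R : realType) (d : nat).
Notation V := 'rV[R]_d.

Definition lower_semicont_at (q : V -> R) (x : V) : Prop :=
  forall e, 0 < e ->
    exists2 delta, 0 < delta & forall y, enorm (y - x) < delta -> q x - e <= q y.

Lemma closed_efun_scale_add (lam : R) (h : V -> \bar R) (q : V -> R) :
  0 < lam -> never_minfty h -> closed_efun h -> (forall x, lower_semicont_at q x) ->
  closed_efun (fun u => lam%:E * h u + (q u)%:E)%E.
Proof.
move=> lam0 hn hc qlsc a x near_a.
have hx_le e : 0 < e -> (h x <= ((a + e - q x) / lam)%:E)%E.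
  move=> e0; apply: hc => e' e'0.
  have [delta delta0 qnear] := qlsc x e e0.
  have [y [yx hy]] := near_a (Num.min e' delta) ltac:(by rewrite lt_min e'0 delta0).
  have qy : q x - e <= q y by apply: qnear; apply: lt_le_trans yx _; rewrite ge_min lexx orbT.
  exists y; split; first by apply: lt_le_trans yx _; rewrite ge_min lexx.
  move: hy; case: (h y) => [hy| |]; last by rewrite leNye.
  - by rewrite -EFinM -EFinD !lee_fin ler_pdivlMr // mulrC => ?; lra.
  - by rewrite mulry gtr0_sg // mul1e addye.
move: hx_le; case Ex: (h x) => [hx| |] hx_le; last by have := hn x; rewrite Ex.
- rewrite -EFinM -EFinD lee_fin; apply/ler_addgt0Pr => e e0.
  by have := hx_le e e0; rewrite lee_fin ler_pdivlMr // mulrC => ?; lra.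
- by have := hx_le 1 ltr01; rewrite leye_eq.
Qed.

Lemma lower_semicont_half_sqr_dist (w x : V) :
  lower_semicont_at (fun u => 2^-1 * enorm (u - w) ^+ 2) x.
Proof.
move=> e e0; set A := inner (x - w) (x - w).
have A0 : 0 <= A := inner_ge0 _.
pose eta := Num.min 1 (e / (A + 1)).
have eta0 : 0 < eta by rewrite lt_min ltr01 divr_gt0 // ltr_wpDl.
have eta1 : eta <= 1 by rewrite ge_min lexx.
have etaA : eta * (A + 1) <= e by rewrite -ler_pdivlMr ?ltr_wpDl // ge_min lexx orbT.
exists eta => // y yx.
have yx2 : inner (y - x) (y - x) <= eta ^+ 2.
  by rewrite -enorm_sqr; have := enorm_ge0 (y - x); nra.
have := inner_selfD_ge (x - w) (y - x) eta0.
have -> : x - w + (y - x) = y - w by rewrite addrC addrA subrK.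
rewrite -/A !enorm_sqr.
have coef : 1 - eta^-1 <= 0 by rewrite subr_le0 invf_ge1.
have : (1 - eta^-1) * eta ^+ 2 <= (1 - eta^-1) * inner (y - x) (y - x).
  exact: ler_wnM2l.
have -> : (1 - eta^-1) * eta ^+ 2 = eta ^+ 2 - eta by field; rewrite gt_eqF.
have : 0 <= eta ^+ 2 := sqr_ge0 eta.
rewrite -/A; nra.
Qed.

End Closed.

Section Box.
Variables (R : realType) (d : nat).
Notation V := 'rV[R]_d.

Definition box (c : V) (r : R) : set V :=
  [set u | forall i, `|u ord0 i - c ord0 i| <= r].

Lemma box_center (c : V) (r : R) : 0 <= r -> box c r c.
Proof. by move=> r0 i; rewrite subrr normr0. Qed.

Lemma compact_box (c : V) (r : R) : compact (box c r).
Proof.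
have -> : box c r = [set u | forall i, `[c ord0 i - r, c ord0 i + r]%classic (u ord0 i)].
  by apply/seteqP; split => u ubox i; have := ubox i; rewrite /= in_itv /= -ler_distl.
exact: (@rV_compact R d _ (fun i => @segment_compact R _ _)).
Qed.

(* The topology of ['rV_d] is that of the max norm; [enorm_lt_coord] compares it with [enorm]. *)
Lemma closed_efun_closure_le (g : V -> \bar R) (c : R) (p : V) :
  closed_efun g -> closure [set u | (g u <= c%:E)%E] p -> (g p <= c%:E)%E.
Proof.
move=> gc pcl; apply: gc => e e0.
have [|y [gy py]] := pcl (ball p (e / d.+1%:R)).
  by apply: nbhsx_ballx; rewrite divr_gt0 ?ltr0n.
exists y; split => //; apply: enorm_lt_coord => // i.
by move: py => -[_ /(_ ord0 i)]; rewrite !mxE distrC.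
Qed.

Lemma closed_efun_min_box (g : V -> \bar R) (c : V) (r : R) : closed_efun g -> 0 <= r ->
  exists2 p, box c r p & forall u, box c r u -> (g p <= g u)%E.
Proof.
move=> gc r0.
have [[u0 [u0box gu0]] | all_infty] :=
  pselect (exists u, box c r u /\ g u != +oo%E); last first.
  exists c; first exact: box_center.
  move=> u ubox; suff -> : g u = +oo%E by rewrite leey.
  by apply/eqP; apply: contra_notT all_infty => gu; exists u.
pose D := [set a : R | exists u, box c r u /\ (g u <= a%:E)%E].
pose B a := [set u | box c r u /\ (g u <= a%:E)%E].
have [a0 Da0] : exists a, D a.
  move: gu0; case E: (g u0) => [a| |] // _.
  - by exists a, u0; rewrite E.
  - by exists 0, u0; rewrite E leNye.
have Bfilter : ProperFilter (filter_from D B).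
  apply: filter_from_proper; last by move=> a [u ua]; exists u.
  apply: filter_from_filter; first by exists a0.
  move=> a b Da Db; wlog ab : a b Da Db / a <= b.
    move=> wl; have [ab|/ltW ba] := leP a b; first exact: wl.
    by have [e De sub] := wl b a Db Da ba; exists e => // u /sub[]; split.
  exists a => // u [ubox gu]; split; split => //.
  by apply: le_trans gu _; rewrite lee_fin.
have [p [pbox pcluster]] : box c r `&` cluster (filter_from D B) !=set0.
  by apply: compact_box; exists a0 => // u [].
have gp_le a : D a -> (g p <= a%:E)%E.
  move=> Da; apply: closed_efun_closure_le gc _ => N Np.
  by have [|y [[_ gy] Ny]] := pcluster (B a) N _ Np; [exists a | exists y].
exists p => // u ubox; case E: (g u) => [a| |]; last first.
- have gp_ninfty a : (g p <= a%:E)%E by apply: gp_le; exists u; rewrite E leNye.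
  move: gp_ninfty; case: (g p) => [b| |] gp //.
  - by have := gp (b - 1); rewrite lee_fin => ?; exfalso; lra.
  - by have := gp 0.
- by rewrite leey.
- by apply: gp_le; exists u; rewrite E.
Qed.

End Box.

Section Prox.
Variables (R : realType) (d : nat).
Notation V := 'rV[R]_d.
Implicit Types (lam : R) (h : V -> \bar R) (w p u : V).

Lemma prox_obj_fin lam h w u hu : h u = hu%:E ->
  prox_obj lam h w u = (lam * hu + 2^-1 * enorm (u - w) ^+ 2)%:E.
Proof. by move=> huE; rewrite /prox_obj huE EFinD EFinM. Qed.

Lemma prox_obj_pinfty lam h w u : 0 < lam -> h u = +oo%E -> prox_obj lam h w u = +oo%E.
Proof. by move=> lam0 huE; rewrite /prox_obj huE mulry gtr0_sg // mul1e addye. Qed.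

Lemma closed_prox_obj lam h w :
  0 < lam -> never_minfty h -> closed_efun h -> closed_efun (prox_obj lam h w).
Proof.
move=> lam0 hn hc; apply: closed_efun_scale_add => // x.
exact: lower_semicont_half_sqr_dist.
Qed.

(* Along the segment from [c] to [u], convexity propagates a lower bound on the unit box
   outwards. *)
Lemma convex_efun_growth h (c : V) (hc M : R) :
  convex_efun h -> never_minfty h -> h c = hc%:E ->
  (forall v, box c 1 v -> (M%:E <= h v)%E) ->
  forall u, 1 < enorm (u - c) -> ((hc - (hc - M) * enorm (u - c))%:E <= h u)%E.
Proof.
move=> hcv hn hcE Mle u u_far; set rho := enorm (u - c).
have rho0 : 0 < rho := lt_trans ltr01 u_far.
pose t := rho^-1.
have t0 : 0 < t by rewrite invr_gt0.
have t1 : t < 1 by rewrite invf_lt1.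
pose v := t *: u + (1 - t) *: c.
have vbox : box c 1 v.
  move=> i; have -> : v ord0 i - c ord0 i = t * (u ord0 i - c ord0 i).
    by rewrite !mxE; ring.
  have := normr_coord_le_enorm (u - c) i; rewrite !mxE -/rho => uci.
  by rewrite normrM gtr0_norm // -(mulVf (lt0r_neq0 rho0)) ler_wpM2l // ltW.
have := le_trans (Mle v vbox) (hcv u c t ltac:(by rewrite t0 t1)).
rewrite hcE; case huE: (h u) => [hu| |]; last by have := hn u; rewrite huE.
- rewrite -!EFinM -EFinD !lee_fin => /(ler_wpM2l (ltW rho0)).
  have -> : rho * (t * hu + (1 - t) * hc) = hu + (rho - 1) * hc.
    by rewrite /t; field; rewrite gt_eqF.
  by move=> ?; lra.
- by rewrite leey.
Qed.

Lemma prox_obj_ge_far lam h w (c : V) (hc K : R) :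
  0 < lam -> 0 <= K -> never_minfty h -> h c = hc%:E ->
  (forall u, 1 < enorm (u - c) -> ((hc - K * enorm (u - c))%:E <= h u)%E) ->
  forall u, 4 * lam * K + 2 * enorm (c - w) + 1 < enorm (u - c) ->
  (prox_obj lam h w c <= prox_obj lam h w u)%E.
Proof.
move=> lam0 K0 hn hcE growth u; set rho := enorm (u - c); set a := enorm (c - w) => u_far.
have a0 : 0 <= a := enorm_ge0 _.
have lamK : 0 <= lam * K by rewrite mulr_ge0 // ltW.
have : 1 < rho by apply: le_lt_trans _ u_far; lra.
move/growth; rewrite -/rho.
case huE: (h u) => [hu| |]; last by have := hn u; rewrite huE.
- rewrite (prox_obj_fin _ _ hcE) (prox_obj_fin _ _ huE) !lee_fin -/rho => hu_ge.
  have := inner_selfD_ge (u - c) (c - w) (ltac:(by rewrite invr_gt0 ltr0n) : 0 < 2^-1).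
  rewrite invrK addrA subrK -!enorm_sqr -/rho -/a => uw_ge.
  have := ler_wpM2l (ltW lam0) hu_ge.
  have : 0 <= (rho - 4 * (lam * K) - 2 * a) * rho by rewrite mulr_ge0 ?enorm_ge0 //; lra.
  have : 0 <= (rho - 2 * a) * a by rewrite mulr_ge0 //; lra.
  by move=> ? ? ?; lra.
- by move=> _; rewrite (prox_obj_pinfty _ lam0 huE) leey.
Qed.

(* Minimize over a box so large that [prox_obj_ge_far] excludes every point outside it;
   [M] is the minimum of [h] on the unit box around [c]. *)
Lemma is_prox_exists lam h w : 0 < lam -> proper_fun h -> closed_efun h -> convex_efun h ->
  exists p, is_prox lam h w p.
Proof.
move=> lam0 [hn [c hc_fin]] hcl hcv.
have [hc hcE] : exists hc, h c = hc%:E.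
  by move: hc_fin (hn c); case: (h c) => [hc| |] // _ _; exists hc.
have [p1 _ p1min] := closed_efun_min_box c hcl ler01.
have [M p1E] : exists M, h p1 = M%:E.
  move: (p1min c (box_center c ler01)) (hn p1); rewrite hcE.
  by case: (h p1) => [M| |] // _ _; exists M.
have Mhc : M <= hc by rewrite -lee_fin -p1E -hcE; apply: p1min; apply: box_center.
have Mle v : box c 1 v -> (M%:E <= h v)%E by rewrite -p1E; apply: p1min.
have growth := convex_efun_growth hcv hn hcE Mle.
set r := 4 * lam * (hc - M) + 2 * enorm (c - w) + 1.
have r0 : 0 <= r.
  have : 0 <= lam * (hc - M) by rewrite mulr_ge0 ?subr_ge0 // ltW.
  by rewrite /r; have := enorm_ge0 (c - w); lra.
have [p _ pmin] := closed_efun_min_box c (@closed_prox_obj _ h w lam0 hn hcl) r0.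
exists p => u; have [ubox|uout] := pselect (box c r u); first exact: pmin.
apply: le_trans (pmin c (box_center c r0)) _.
apply: (prox_obj_ge_far lam0 _ hn hcE growth); first by rewrite subr_ge0.
have [i /negP] := (existsNP _).2 uout; rewrite -ltNge => ui.
by apply: lt_le_trans ui _; have := normr_coord_le_enorm (u - c) i; rewrite !mxE.
Qed.

Lemma is_prox_finite lam h w p u : 0 < lam -> never_minfty h -> is_prox lam h w p ->
  h u != +oo%E -> exists hp, h p = hp%:E.
Proof.
move=> lam0 hn pp hu_fin; case hpE: (h p) => [hp| |]; first by exists hp.
- move: (pp u) hu_fin (hn u); rewrite (prox_obj_pinfty _ lam0 hpE).
  by case huE: (h u) => [hu| |] //; rewrite (prox_obj_fin _ _ huE).
- by have := hn p; rewrite hpE.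
Qed.

(* Compare [p] with the points [p + t (u - p)] and let [t] tend to [0]. *)
Lemma is_prox_le lam h w p u hp hu : 0 < lam -> never_minfty h -> convex_efun h ->
  is_prox lam h w p -> h p = hp%:E -> h u = hu%:E ->
  lam * (hp - hu) <= inner (p - w) (u - p).
Proof.
move=> lam0 hn hcv pp hpE huE; rewrite -subr_le0.
set I := inner (p - w) (u - p); set Q := inner (u - p) (u - p).
apply: (le0_of_le_small (k := 2^-1 * Q)) => [|t /andP[t0 t1]].
  by rewrite mulr_ge0 ?inner_ge0.
pose ut := t *: u + (1 - t) *: p.
have utw : ut - w = (p - w) + t *: (u - p) by apply/rowP => i; rewrite !mxE; ring.
have := hcv u p t ltac:(by rewrite t0 t1); rewrite /= -/ut hpE huE -!EFinM -EFinD.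
case hutE: (h ut) => [hut| |]; last by have := hn ut; rewrite hutE.
- rewrite lee_fin => hut_le.
  have := pp ut; rewrite (prox_obj_fin _ _ hpE) (prox_obj_fin _ _ hutE) lee_fin.
  rewrite utw !enorm_sqr inner_selfDZ -/I -/Q => prox_le.
  have := ler_wpM2l (ltW lam0) hut_le => lam_hut.
  have : t * (lam * (hp - hu) - I) <= t * (t * (2^-1 * Q)) by lra.
  by rewrite ler_pM2l.
- by rewrite leye_eq.
Qed.

End Prox.

Lemma convex_fun_midpoint (R : realType) (d : nat) (f : 'rV[R]_d -> R) (x y : 'rV[R]_d) :
  convex_fun f -> f (2^-1 *: (x + y)) <= 2^-1 * (f x + f y).
Proof.
move=> fc; have half : 1 - 2^-1 = 2^-1 :> R by field.
have := fc x y 2^-1; rewrite half -scalerDr -mulrDr; apply.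
by rewrite invr_ge0 ler0n invf_le1 ?ler1n ?ltr0n.
Qed.

Section GradientMapping.
Variables (R : realType) (d : nat).
Notation V := 'rV[R]_d.
Variables (f : V -> R) (h : V -> \bar R) (x : V) (lam : R).

Lemma grad_map_prox : lam != 0 ->
  x - lam *: grad_map f lam h x = prox lam h (x - lam *: grad f x).
Proof. by move=> lam_neq0; rewrite /grad_map scalerA mulfV // scale1r opprB addrC subrK. Qed.

Lemma grad_map_h_decrease (hx : R) : 0 < lam -> proper_fun h -> closed_efun h ->
  convex_efun h -> h x = hx%:E ->
  let G := grad_map f lam h x in
  exists2 hp, h (x - lam *: G) = hp%:E & hp - hx <= lam * (inner G (grad f x) - inner G G).
Proof.
move=> lam0 hprop hcl hcv hxE G; have [hn _] := hprop.
rewrite grad_map_prox ?lt0r_neq0 //.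
set g := grad f x; set w := x - lam *: g; set p := prox lam h w.
have pp : is_prox lam h w p by apply: xgetPex; apply: is_prox_exists.
have [hp hpE] := is_prox_finite lam0 hn pp (ltac:(by rewrite hxE) : h x != +oo%E).
exists hp => //; have := is_prox_le lam0 hn hcv pp hpE hxE.
have xp : x - p = lam *: G by rewrite /p -grad_map_prox ?lt0r_neq0 // opprB addrC subrK.
have pw : p - w = lam *: (g - G).
  have -> : p = x - lam *: G by rewrite -xp opprB addrC subrK.
  by apply/rowP => i; rewrite !mxE; ring.
have -> : inner (p - w) (x - p) = lam * (lam * (inner G g - inner G G)).
  by rewrite pw xp /inner -sumrB !mulr_sumr; apply: eq_bigr => i _; rewrite !mxE; ring.
by rewrite ler_pM2l.
Qed.

End GradientMapping.

Theorem mainTheorem6 (R : realType) (d : nat)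
  (f : 'rV[R]_d -> R) (h : 'rV[R]_d -> \bar R) (x : 'rV[R]_d) (lam : R) :
  convex_fun f -> differentiable_everywhere f ->
  proper_fun h -> closed_efun h -> convex_efun h ->
  0 < lam -> LS f h x lam ->
  let xplus := x - lam *: grad_map f lam h x in
  (Fsum f h xplus <= Fsum f h x - (lam / 2 * enorm (grad_map f lam h x) ^+ 2)%:E)%E.
Proof.
move=> fc _ hprop hcl hcv lam0 LSx; cbv zeta; have [hn _] := hprop.
case hxE: (h x) => [hx| |]; last by have := hn x; rewrite hxE.
  2: by rewrite /Fsum hxE addey // -EFinN addye // leey.
have [hp hpE h_dec] := grad_map_h_decrease f lam0 hprop hcl hcv hxE.
move: h_dec LSx; rewrite /LS /Fsum hpE hxE /=.
set G := grad_map f lam h x; set g := grad f x; clearbody G g => h_dec LSx.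
have f_mid : f (x - lam *: G) <= 2^-1 * (f x + f (x - (2 * lam) *: G)).
  have -> : x - lam *: G = 2^-1 *: (x + (x - (2 * lam) *: G)).
    by apply/rowP => i; rewrite !mxE; field.
  exact: convex_fun_midpoint.
rewrite -!EFinD lee_fin enorm_sqr; rewrite enorm_sqr in LSx; lra.
Qed.
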